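(* Let $n\ge 2$ and let $\mathsf r=[r_1,\dots,r_{2n-2}]\in\textsc{fact}(\lambda_n)$. Then $\mathsf r$ is tree-like if and only if there exist integers $a_0,\dots,a_{2n-2}$ such that, for every $\ell=1,\dots,2n-2$, we have $r_\ell=(\!(a_{\ell-1},a_\ell)\!)$ and $|a_\ell-a_{\ell-1}|<n$.
   Context: The affine symmetric group $\widetilde S_n$ is the group, under composition $(vw)(k)=v(w(k))$, of bijections $w:\mathbb Z\to\mathbb Z$ with $w(i+n)=w(i)+n$ for all $i$ and $\sum_{i=1}^n w(i)=\binom{n+1}{2}$. For integers $i\not\equiv j\pmod n$, $(\!(i,j)\!)$ is the affine reflection interchanging $i+kn$ and $j+kn$ for every $k\in\mathbb Z$ and fixing all other integers; thus $(\!(i,j)\!)=(\!(j,i)\!)=(\!(i+kn,j+kn)\!)$. Let $\lambda_n\in\widetilde S_n$ be the element with $\lambda_n(k)=k+n$ if $k\not\equiv0\pmod n$ and $\lambda_n(k)=k-n(n-1)$ if $k\equiv 0\pmod n$ (translation by $(1,\dots,1,-n+1)$). The reflection length of $w$ is the minimal number of reflections with product $w$; $\lambda_n$ has reflection length $2n-2$. A factorization of $w$ is a sequence $[r_1,\dots,r_m]$ of reflections with $w=r_1r_2\cdots r_m$, and $\textsc{fact}(\lambda_n)$ is the set of factorizations of $\lambda_n$ with $m=2n-2$. A factorization $[r_1,\dots,r_{2n-2}]\in\textsc{fact}(\lambda_n)$ is tree-like if one can write $r_k=(\!(a_{k-1},b_k)\!)$ with integers $a_{k-1}<b_k$ for $1\le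 k\le 2n-2$, such that $a_k\equiv b_k\pmod n$ for $1\le k\le 2n-3$. *)

From Stdlib Require Import ZArith List Lia.
Open Scope Z_scope.

(* The affine reflection ((i,j)) of the affine symmetric group on n letters:
   interchanges i + k n and j + k n for all k, fixes other integers.
   Only meaningful when i mod n <> j mod n. *)
Definition aff_refl (n : nat) (i j : Z) : Z -> Z :=
  fun k =>
    if Z.eqb (k mod Z.of_nat n) (i mod Z.of_nat n) then k + (j - i)
    else if Z.eqb (k mod Z.of_nat n) (j mod Z.of_nat n) then k + (i - j)
    else k.

Definition is_refl_ij (n : nat) (r : Z -> Z) (i j : Z) : Prop :=
  i mod Z.of_nat n <> j mod Z.of_nat n /\ forall k, r k = aff_refl n i j k.

Definition is_affine_reflection (n : nat) (r : Z -> Z) : Prop :=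
  exists i j, is_refl_ij n r i j.

Definition lambda_n (n : nat) : Z -> Z :=
  fun k =>
    if Z.eqb (k mod Z.of_nat n) 0 then k - Z.of_nat n * (Z.of_nat n - 1)
    else k + Z.of_nat n.

(* Product r_1 r_2 ... r_m with (vw)(k) = v(w(k)). *)
Definition prod_list (rs : list (Z -> Z)) : Z -> Z :=
  fold_right (fun r acc => fun k => r (acc k)) (fun k => k) rs.

(* The l-th factor r_l (1-indexed). *)
Definition factor (rs : list (Z -> Z)) (l : nat) : Z -> Z :=
  nth (l - 1) rs (fun k => k).

Definition in_fact_lambda (n : nat) (rs : list (Z -> Z)) : Prop :=
  length rs = (2 * n - 2)%nat /\
  (forall r, In r rs -> is_affine_reflection n r) /\
  (forall k, prod_list rs k = lambda_n n k).

Definition tree_like (n : nat) (rs : list (Z -> Z)) : Prop :=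
  exists a b : nat -> Z,
    (forall l : nat, (1 <= l <= 2 * n - 2)%nat ->
        a (l - 1)%nat < b l /\ is_refl_ij n (factor rs l) (a (l - 1)%nat) (b l)) /\
    (forall l : nat, (1 <= l <= 2 * n - 3)%nat ->
        a l mod Z.of_nat n = b l mod Z.of_nat n).

From Stdlib Require Import ZArith List Lia.
Open Scope Z_scope.

(* Write the factorization as a chain r_k = ((c_{k-1}, c_k)), k = 1..m, m = 2n-2, and
   follow the trajectory of an integer y under r_1, then r_2, ...: since r_1 ... r_m is
   lambda_n, every trajectory has total displacement -n or n(n-1). The trajectory of c_0
   is the chain itself; a trajectory in another residue class is moved at step k only
   when it sits in the class of c_k, and then jumps by c_{k-1} - c_k.

   If the chain increases, these other trajectories never go up, so the one jumping
   from c_k down to c_{k-1} has displacement -n, whence c_k - c_{k-1} < n.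

   Conversely, if all steps are shorter than n, each of the n-1 other classes must move
   at least twice, and exactly one of them moves at each of the 2n-2 steps; so each
   moves exactly twice. For n >= 3 the class moving at step k then has displacement at
   most 2(n-1) < n(n-1) in absolute value, hence -n, which forces c_{k-1} < c_k. For
   n = 2 a decreasing chain is tree-like too, reading each ((c_{k-1}, c_k)) as
   ((c_k, c_{k-1})). A tree-like factorization becomes an increasing chain after
   translating its reflections by multiples of n. *)

Definition nsum (k : nat) (f : nat -> nat) : nat := list_sum (map f (seq 0 k)).

Lemma nsum_S k f : nsum (S k) f = (nsum k f + f k)%nat.
Proof. unfold nsum. rewrite seq_S, map_app, list_sum_app. cbn. lia. Qed.

Lemma nsum_ext k f g : (forall i, (i < k)%nat -> f i = g i) -> nsum k f = nsum k g.
Proof.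
  induction k as [|k IH]; intros H; [reflexivity|].
  rewrite !nsum_S, (H k), IH; [reflexivity | intros; apply H | ]; lia.
Qed.

Lemma nsum_le k f g : (forall i, (i < k)%nat -> (f i <= g i)%nat) -> (nsum k f <= nsum k g)%nat.
Proof.
  induction k as [|k IH]; intros H; [reflexivity|].
  rewrite !nsum_S. specialize (IH ltac:(intros; apply H; lia)). specialize (H k ltac:(lia)). lia.
Qed.

Lemma nsum_add k f g : nsum k (fun i => f i + g i)%nat = (nsum k f + nsum k g)%nat.
Proof. induction k as [|k IH]; [reflexivity|]. rewrite !nsum_S, IH. lia. Qed.

Lemma nsum_const k w : nsum k (fun _ => w) = (k * w)%nat.
Proof. induction k as [|k IH]; [reflexivity|]. rewrite nsum_S, IH. lia. Qed.

Lemma nsum_indicator k a w : (a < k)%nat -> nsum k (fun i => if (i =? a)%nat then w else 0%nat) = w.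
Proof.
  induction k as [|k IH]; intros Ha; [lia|]. rewrite nsum_S.
  destruct (Nat.eqb_spec k a) as [->|Hne].
  - rewrite (nsum_ext a _ (fun _ => 0%nat)), nsum_const; [lia|].
    intros i Hi. destruct (Nat.eqb_spec i a); [lia|reflexivity].
  - rewrite IH; lia.
Qed.

Lemma nsum_swap k l (f : nat -> nat -> nat) :
  nsum k (fun i => nsum l (f i)) = nsum l (fun j => nsum k (fun i => f i j)).
Proof.
  induction k as [|k IH].
  - rewrite (nsum_ext l _ (fun _ => 0%nat)), nsum_const; [cbn; lia | reflexivity].
  - rewrite nsum_S, IH, <- nsum_add. apply nsum_ext. intros j _. now rewrite nsum_S.
Qed.

Lemma nsum_eq_of_le k f g : (forall i, (i < k)%nat -> (g i <= f i)%nat) ->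
  (nsum k f <= nsum k g)%nat -> forall i, (i < k)%nat -> f i = g i.
Proof.
  induction k as [|k IH]; intros Hle Hsum i Hi; [lia|].
  rewrite !nsum_S in Hsum.
  pose proof (nsum_le k g f ltac:(intros; apply Hle; lia)).
  pose proof (Hle k ltac:(lia)).
  destruct (Nat.eq_dec i k) as [->|Hik]; [lia|].
  apply IH; [intros; apply Hle; lia | lia | lia].
Qed.

Lemma mod_translate (N i i' j j' : Z) :
  i' mod N = i mod N -> j' - i' = j - i -> j' mod N = j mod N.
Proof.
  intros Hi Hd. replace j' with (i' + (j - i)) by lia.
  rewrite <- Zplus_mod_idemp_l, Hi, Zplus_mod_idemp_l. f_equal. ring.
Qed.

Lemma residue_of_nat_eq n r z : (r < n)%nat ->
  Z.of_nat r mod Z.of_nat n = z mod Z.of_nat n <-> r = Z.to_nat (z mod Z.of_nat n).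
Proof.
  intros Hr. rewrite Z.mod_small by lia.
  pose proof (Z.mod_pos_bound z (Z.of_nat n) ltac:(lia)). lia.
Qed.

Section AffineReflection.
Variable n : nat.
Local Notation N := (Z.of_nat n).
Variables i j : Z.

Lemma aff_refl_at_i x : x mod N = i mod N -> aff_refl n i j x = x + (j - i).
Proof. intros H. unfold aff_refl. now rewrite H, Z.eqb_refl. Qed.

Lemma aff_refl_at_j x : i mod N <> j mod N -> x mod N = j mod N -> aff_refl n i j x = x + (i - j).
Proof.
  intros Hij H. unfold aff_refl. rewrite H, Z.eqb_refl.
  destruct (Z.eqb_spec (j mod N) (i mod N)); congruence.
Qed.

Lemma aff_refl_other x : x mod N <> i mod N -> x mod N <> j mod N -> aff_refl n i j x = x.
Proof.
  intros Hi Hj. unfold aff_refl.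
  destruct (Z.eqb_spec (x mod N) (i mod N)), (Z.eqb_spec (x mod N) (j mod N)); congruence.
Qed.

Lemma aff_refl_congr x y : x mod N = y mod N -> aff_refl n i j x mod N = aff_refl n i j y mod N.
Proof.
  intros H. unfold aff_refl. rewrite H.
  destruct (_ =? _); [|destruct (_ =? _)]; auto;
    rewrite <- Zplus_mod_idemp_l, H, Zplus_mod_idemp_l; reflexivity.
Qed.

Lemma aff_refl_involutive x : i mod N <> j mod N -> aff_refl n i j (aff_refl n i j x) = x.
Proof.
  intros Hij.
  destruct (Z.eq_dec (x mod N) (i mod N)) as [Hi|Hi];
    [|destruct (Z.eq_dec (x mod N) (j mod N)) as [Hj|Hj]].
  - rewrite (aff_refl_at_i x Hi), aff_refl_at_j; [ring|assumption|].
    apply (mod_translate N i x j); [assumption|ring].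
  - rewrite (aff_refl_at_j x Hij Hj), aff_refl_at_i; [ring|].
    apply (mod_translate N j x i); [assumption|ring].
  - rewrite (aff_refl_other x Hi Hj). now apply aff_refl_other.
Qed.

Lemma aff_refl_comm x : i mod N <> j mod N -> aff_refl n j i x = aff_refl n i j x.
Proof.
  intros Hij. unfold aff_refl.
  destruct (Z.eqb_spec (x mod N) (i mod N)), (Z.eqb_spec (x mod N) (j mod N)); congruence.
Qed.

Lemma aff_refl_translate i' j' x : i' mod N = i mod N -> j' - i' = j - i ->
  aff_refl n i' j' x = aff_refl n i j x.
Proof.
  intros Hi Hd. unfold aff_refl.
  rewrite Hi, (mod_translate N i i' j j' Hi Hd), Hd.
  now replace (i' - j') with (i - j) by lia.
Qed.

End AffineReflection.

Lemma is_refl_ij_sym n r i j : is_refl_ij n r i j -> is_refl_ij n r j i.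
Proof.
  intros [Hij Hr]. split; [congruence|]. intros x. rewrite Hr. now apply aff_refl_comm.
Qed.

Lemma is_refl_ij_translate n r i j i' j' : is_refl_ij n r i j ->
  i' mod Z.of_nat n = i mod Z.of_nat n -> j' - i' = j - i -> is_refl_ij n r i' j'.
Proof.
  intros [Hij Hr] Hi Hd. split.
  - now rewrite Hi, (mod_translate _ i i' j j' Hi Hd).
  - intros x. now rewrite Hr, (aff_refl_translate n i j i' j').
Qed.

Lemma lambda_n_displacement n z y : lambda_n n z = y ->
  z - y = - Z.of_nat n \/ z - y = Z.of_nat n * (Z.of_nat n - 1).
Proof. unfold lambda_n. destruct (_ =? 0); lia. Qed.

Section Track.
Variable n : nat.
Local Notation N := (Z.of_nat n).
Variable c : nat -> Z.

(* The image of y under the inverse of r_1 ... r_k. *)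
Fixpoint track (y : Z) (k : nat) : Z :=
  match k with
  | O => y
  | S k => aff_refl n (c k) (c (S k)) (track y k)
  end.

Lemma track_main k : track (c 0%nat) k = c k.
Proof.
  induction k as [|k IH]; [reflexivity|]. cbn [track].
  rewrite IH, aff_refl_at_i by reflexivity. ring.
Qed.

Lemma track_congr y z k : y mod N = z mod N -> track y k mod N = track z k mod N.
Proof. intros H. induction k; cbn [track]; auto using aff_refl_congr. Qed.

Variable m : nat.
Hypothesis c_step_mod : forall k, (k < m)%nat -> c k mod N <> c (S k) mod N.

Lemma track_mod_inj y z k : (k <= m)%nat ->
  track y k mod N = track z k mod N -> y mod N = z mod N.
Proof.
  induction k as [|k IH]; cbn [track]; intros Hk H; [assumption|].
  apply IH; [lia|].
  rewrite <- (aff_refl_involutive n (c k) (c (S k)) (track y k)),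
    <- (aff_refl_involutive n (c k) (c (S k)) (track z k)) by (apply c_step_mod; lia).
  now apply aff_refl_congr.
Qed.

Lemma track_surj z k : (k <= m)%nat -> exists y, track y k = z.
Proof.
  revert z. induction k as [|k IH]; intros z Hk; [now exists z|].
  destruct (IH (aff_refl n (c k) (c (S k)) z)) as [y Hy]; [lia|].
  exists y. cbn [track]. rewrite Hy. apply aff_refl_involutive, c_step_mod. lia.
Qed.

Definition arrives (y : Z) (k : nat) : bool := track y k mod N =? c (S k) mod N.

Definition arrivals (y : Z) (k : nat) : nat := nsum k (fun j => Nat.b2n (arrives y j)).

Section OffMain.
Variable y : Z.
Hypothesis y_off_main : y mod N <> c 0%nat mod N.

Lemma track_off_main k : (k <= m)%nat -> track y k mod N <> c k mod N.
Proof.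
  intros Hk E. apply y_off_main, (track_mod_inj y (c 0%nat) k Hk). now rewrite track_main.
Qed.

Lemma track_S_off_main k : (k < m)%nat ->
  track y (S k) = track y k + (if arrives y k then c k - c (S k) else 0).
Proof.
  intros Hk. cbn [track]. unfold arrives.
  destruct (Z.eqb_spec (track y k mod N) (c (S k) mod N)) as [E|E].
  - apply aff_refl_at_j; [apply c_step_mod|]; assumption.
  - rewrite aff_refl_other; [ring| |assumption]. apply track_off_main. lia.
Qed.

Lemma track_antitone a b : (forall k, (k < m)%nat -> c k < c (S k)) ->
  (a <= b <= m)%nat -> track y b <= track y a.
Proof.
  intros Hinc. induction b as [|b IH]; intros Hab.
  - replace a with 0%nat by lia. lia.
  - destruct (Nat.eq_dec a (S b)) as [->|Ha]; [lia|].
    specialize (IH ltac:(lia)). specialize (Hinc b ltac:(lia)).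
    rewrite track_S_off_main by lia. destruct (arrives y b); lia.
Qed.

Lemma track_dist_le a b : (forall k, (k < m)%nat -> Z.abs (c (S k) - c k) < N) ->
  (a <= b <= m)%nat ->
  Z.abs (track y b - track y a) <= (N - 1) * (Z.of_nat (arrivals y b) - Z.of_nat (arrivals y a)).
Proof.
  intros Hsmall. induction b as [|b IH]; intros Hab.
  - replace a with 0%nat by lia. lia.
  - destruct (Nat.eq_dec a (S b)) as [->|Ha]; [lia|].
    specialize (IH ltac:(lia)). specialize (Hsmall b ltac:(lia)).
    rewrite track_S_off_main by lia. unfold arrivals in *. rewrite nsum_S, Nat2Z.inj_add.
    destruct (arrives y b); cbn [Nat.b2n]; lia.
Qed.

End OffMain.

Hypothesis track_lambda : forall y, lambda_n n (track y m) = y.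

Lemma main_track_displacement : c m - c 0%nat = - N \/ c m - c 0%nat = N * (N - 1).
Proof. rewrite <- track_main. apply lambda_n_displacement, track_lambda. Qed.

Theorem increasing_chain_step_lt : (1 <= n)%nat -> (forall k, (k < m)%nat -> c k < c (S k)) ->
  forall k, (k < m)%nat -> c (S k) - c k < N.
Proof.
  intros Hn Hinc k Hk.
  destruct (track_surj (c (S k)) k) as [y Hy]; [lia|].
  assert (Hoff : y mod N <> c 0%nat mod N).
  { intros E. apply (c_step_mod k Hk). rewrite <- Hy, <- (track_main k). now apply track_congr. }
  assert (Hback : track y (S k) = c k).
  { rewrite track_S_off_main by assumption. unfold arrives. rewrite Hy, Z.eqb_refl. ring. }
  pose proof (track_antitone y Hoff 0 k Hinc ltac:(lia)) as Hbefore.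
  pose proof (track_antitone y Hoff (S k) m Hinc ltac:(lia)) as Hafter.
  pose proof (lambda_n_displacement _ _ _ (track_lambda y)) as Hnet.
  pose proof (Hinc k Hk).
  assert (c (S k) - c k <> N).
  { intros E. apply (c_step_mod k Hk). replace (c (S k)) with (c k + 1 * N) by lia.
    now rewrite Z_mod_plus_full. }
  cbn [track] in Hbefore. assert (0 <= N * (N - 1)) by nia. lia.
Qed.

Section Counting.
Hypothesis m_eq : m = (2 * n - 2)%nat.
Hypothesis c_step_small : forall k, (k < m)%nat -> Z.abs (c (S k) - c k) < N.

Lemma arrivals_ge_2 y : (2 <= n)%nat -> y mod N <> c 0%nat mod N -> (2 <= arrivals y m)%nat.
Proof.
  intros Hn Hoff.
  pose proof (track_dist_le y Hoff 0 m c_step_small ltac:(lia)) as Hdist.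
  pose proof (lambda_n_displacement _ _ _ (track_lambda y)) as Hnet.
  change (arrivals y 0) with 0%nat in Hdist. cbn [track] in Hdist.
  assert (N <= N * (N - 1)) by nia. nia.
Qed.

Lemma arriving_residue k : (k < m)%nat ->
  exists r, (r < n)%nat /\ forall r', (r' < n)%nat -> arrives (Z.of_nat r') k = (r' =? r)%nat.
Proof.
  intros Hk. destruct (track_surj (c (S k)) k) as [y Hy]; [lia|].
  exists (Z.to_nat (y mod N)). split.
  - pose proof (Z.mod_pos_bound y N ltac:(lia)). lia.
  - intros r Hr. unfold arrives. rewrite <- Hy.
    destruct (Z.eqb_spec (track (Z.of_nat r) k mod N) (track y k mod N)) as [E|E]; symmetry.
    + apply Nat.eqb_eq, (residue_of_nat_eq n r y Hr), (track_mod_inj _ _ k); [lia|assumption].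
    + apply Nat.eqb_neq. intros Er. apply E, track_congr, residue_of_nat_eq; assumption.
Qed.

Lemma arrivals_total : nsum n (fun r => arrivals (Z.of_nat r) m) = m.
Proof.
  unfold arrivals. rewrite nsum_swap.
  rewrite (nsum_ext m _ (fun _ => 1%nat)), nsum_const; [lia|].
  intros k Hk. destruct (arriving_residue k Hk) as [r [Hr Har]].
  rewrite <- (nsum_indicator n r 1 Hr). apply nsum_ext.
  intros r' Hr'. rewrite Har by assumption. now destruct (r' =? r)%nat.
Qed.

Lemma arrivals_off_main_eq_2 r : (2 <= n)%nat -> (r < n)%nat ->
  Z.of_nat r mod N <> c 0%nat mod N -> arrivals (Z.of_nat r) m = 2%nat.
Proof.
  intros Hn Hr Hoff.
  set (rho := Z.to_nat (c 0%nat mod N)).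
  assert (Hrho : (rho < n)%nat) by (pose proof (Z.mod_pos_bound (c 0%nat) N ltac:(lia)); lia).
  set (g := fun s => if (s =? rho)%nat then 0%nat else 2%nat).
  assert (Hg : forall s, (s < n)%nat -> (g s <= arrivals (Z.of_nat s) m)%nat).
  { intros s Hs. unfold g. destruct (Nat.eqb_spec s rho) as [|Hne]; [lia|].
    apply arrivals_ge_2; [assumption|]. now rewrite residue_of_nat_eq. }
  assert (Hsum : (nsum n g + 2 = 2 * n)%nat).
  { rewrite <- (nsum_indicator n rho 2 Hrho) at 1.
    rewrite <- nsum_add, (nsum_ext n _ (fun _ => 2%nat)), nsum_const; [lia|].
    intros s _. unfold g. now destruct (s =? rho)%nat. }
  rewrite (nsum_eq_of_le n _ g Hg); [|rewrite arrivals_total; lia | assumption].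
  unfold g. destruct (Nat.eqb_spec r rho) as [E|]; [|reflexivity].
  exfalso. now apply Hoff, residue_of_nat_eq.
Qed.

Theorem short_chain_increasing : (3 <= n)%nat -> forall k, (k < m)%nat -> c k < c (S k).
Proof.
  intros Hn k Hk.
  destruct (arriving_residue k Hk) as [r [Hr Har]].
  set (y := Z.of_nat r).
  assert (Hy : arrives y k = true) by (unfold y; now rewrite Har, Nat.eqb_refl).
  assert (Hoff : y mod N <> c 0%nat mod N).
  { intros E. apply (c_step_mod k Hk). rewrite <- (track_main k).
    unfold arrives in Hy. apply Z.eqb_eq in Hy. rewrite <- Hy. now apply track_congr. }
  pose proof (arrivals_off_main_eq_2 r ltac:(lia) Hr Hoff) as H2.
  assert (Hstep : arrivals y (S k) = S (arrivals y k)).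
  { unfold arrivals. rewrite nsum_S, Hy. cbn. lia. }
  pose proof (track_dist_le y Hoff 0 k c_step_small ltac:(lia)) as Hbefore.
  pose proof (track_dist_le y Hoff (S k) m c_step_small ltac:(lia)) as Hafter.
  pose proof (track_S_off_main y Hoff k Hk) as Hjump. rewrite Hy in Hjump.
  pose proof (lambda_n_displacement _ _ _ (track_lambda y)) as Hnet.
  pose proof (c_step_small k Hk).
  fold y in H2. rewrite H2, Hstep in Hafter.
  change (arrivals y 0) with 0%nat in Hbefore. cbn [track] in Hbefore.
  assert (2 * (N - 1) < N * (N - 1)) by nia. nia.
Qed.

End Counting.
End Track.

Definition chain (n : nat) (rs : list (Z -> Z)) (c : nat -> Z) : Prop :=
  forall k, (k < length rs)%nat -> is_refl_ij n (nth k rs (fun x => x)) (c k) (c (S k)).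

Lemma factor_S rs k : factor rs (S k) = nth k rs (fun x => x).
Proof. unfold factor. f_equal. lia. Qed.

Lemma chain_iff_factors n rs c : chain n rs c <->
  forall l, (1 <= l <= length rs)%nat -> is_refl_ij n (factor rs l) (c (l - 1)%nat) (c l).
Proof.
  split.
  - intros Hc [|k] Hl; [lia|]. rewrite factor_S. replace (S k - 1)%nat with k by lia. apply Hc. lia.
  - intros H k Hk. rewrite <- factor_S. replace k with (S k - 1)%nat at 2 by lia. apply H. lia.
Qed.

Lemma track_S_shift n c y k :
  track n c y (S k) = track n (fun i => c (S i)) (aff_refl n (c 0%nat) (c 1%nat) y) k.
Proof. induction k as [|k IH]; [reflexivity|]. cbn [track] in *. now rewrite IH. Qed.

Lemma prod_list_track n rs c y : chain n rs c -> prod_list rs (track n c y (length rs)) = y.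
Proof.
  revert c y. induction rs as [|r rs IH]; intros c y Hc; [reflexivity|].
  destruct (Hc 0%nat ltac:(cbn; lia)) as [Hmod Hr].
  change (r (prod_list rs (track n c y (S (length rs)))) = y).
  rewrite track_S_shift, IH, Hr by (intros k Hk; apply (Hc (S k)); cbn; lia).
  now apply aff_refl_involutive.
Qed.

Lemma chain_track_lambda n rs c : in_fact_lambda n rs -> chain n rs c ->
  forall y, lambda_n n (track n c y (length rs)) = y.
Proof. intros [_ [_ Hprod]] Hc y. now rewrite <- Hprod, prod_list_track. Qed.

Lemma chain_step_mod n rs c : chain n rs c ->
  forall k, (k < length rs)%nat -> c k mod Z.of_nat n <> c (S k) mod Z.of_nat n.
Proof. intros Hc k Hk. apply (Hc k Hk). Qed.

(* Translates ((a_{k-1}, b_k)) by a multiple of n so that it starts at c_{k-1}. *)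
Fixpoint glue (a b : nat -> Z) (k : nat) : Z :=
  match k with
  | O => a 0%nat
  | S k => glue a b k + (b (S k) - a k)
  end.

Lemma tree_like_increasing_chain n rs : length rs = (2 * n - 2)%nat -> tree_like n rs ->
  exists c, chain n rs c /\ forall k, (k < length rs)%nat -> c k < c (S k).
Proof.
  intros Hlen [a [b [Hab Hmod]]]. exists (glue a b).
  assert (Hglue : forall k, (k < length rs)%nat -> glue a b k mod Z.of_nat n = a k mod Z.of_nat n).
  { induction k as [|k IH]; intros Hk; [reflexivity|]. cbn [glue].
    rewrite (Hmod (S k)) by lia. apply (mod_translate _ (a k) (glue a b k) (b (S k))); [apply IH; lia|ring]. }
  split; intros k Hk; destruct (Hab (S k) ltac:(lia)) as [Hlt Hr];
    replace (S k - 1)%nat with k in * by lia; cbn [glue]; [|lia].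
  rewrite factor_S in Hr. apply (is_refl_ij_translate _ _ _ _ _ _ Hr); [apply Hglue; lia|ring].
Qed.

Lemma increasing_chain_tree_like n rs c : length rs = (2 * n - 2)%nat -> chain n rs c ->
  (forall k, (k < length rs)%nat -> c k < c (S k)) -> tree_like n rs.
Proof.
  intros Hlen Hc Hinc. exists c, c. split; [|reflexivity].
  intros [|k] Hl; [lia|]. rewrite factor_S. replace (S k - 1)%nat with k by lia.
  split; [apply Hinc | apply Hc]; lia.
Qed.

Lemma two_step_chain_tree_like rs c : in_fact_lambda 2 rs -> chain 2 rs c ->
  (forall k, (k < length rs)%nat -> Z.abs (c (S k) - c k) < 2) -> tree_like 2 rs.
Proof.
  intros Hf Hc Hsmall. pose proof Hf as [Hlen _]. cbn in Hlen.
  pose proof (main_track_displacement 2 c _ (chain_track_lambda _ _ _ Hf Hc)) as Hnet.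
  assert (Hne : forall k, (k < length rs)%nat -> c k <> c (S k)).
  { intros k Hk E. apply (chain_step_mod _ _ _ Hc k Hk). now rewrite E. }
  rewrite Hlen in Hnet, Hsmall, Hne. cbn in Hnet.
  pose proof (Hsmall 0%nat). pose proof (Hsmall 1%nat).
  pose proof (Hne 0%nat). pose proof (Hne 1%nat).
  destruct (Z_lt_le_dec (c 0%nat) (c 1%nat)) as [Hup|Hdown].
  - apply (increasing_chain_tree_like 2 rs c); [lia | assumption |].
    intros k Hk. rewrite Hlen in Hk. assert (k = 0 \/ k = 1)%nat as [-> | ->] by lia; lia.
  - exists (fun l => c (S l)), (fun l => c (l - 1)%nat). split.
    + intros l Hl. assert (l = 1 \/ l = 2)%nat as [-> | ->] by lia;
        rewrite factor_S; split; cbn; try lia; apply is_refl_ij_sym, Hc; lia.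
    + intros l Hl. replace l with 1%nat by lia. cbn.
      replace (c 2%nat) with (c 0%nat + (-1) * 2) by lia. apply Z_mod_plus_full.
Qed.

Theorem proposition3p4 (n : nat) (rs : list (Z -> Z)) :
  (2 <= n)%nat ->
  in_fact_lambda n rs ->
  (tree_like n rs <->
   exists a : nat -> Z,
     forall l : nat, (1 <= l <= 2 * n - 2)%nat ->
       is_refl_ij n (factor rs l) (a (l - 1)%nat) (a l) /\
       Z.abs (a l - a (l - 1)%nat) < Z.of_nat n).
Proof.
  intros Hn Hf. pose proof Hf as [Hlen _]. split.
  - intros Htree.
    destruct (tree_like_increasing_chain n rs Hlen Htree) as [c [Hc Hinc]].
    pose proof (increasing_chain_step_lt n c _ (chain_step_mod _ _ _ Hc)
                  (chain_track_lambda _ _ _ Hf Hc) ltac:(lia) Hinc) as Hlt.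
    exists c. intros l Hl. split.
    + apply chain_iff_factors; [assumption | lia].
    + destruct l as [|k]; [lia|]. replace (S k - 1)%nat with k by lia.
      specialize (Hinc k ltac:(lia)). specialize (Hlt k ltac:(lia)). lia.
  - intros [a Ha].
    assert (Hc : chain n rs a) by (apply chain_iff_factors; intros l Hl; apply Ha; lia).
    assert (Hsmall : forall k, (k < length rs)%nat -> Z.abs (a (S k) - a k) < Z.of_nat n).
    { intros k Hk. replace k with (S k - 1)%nat at 2 by lia. apply Ha. lia. }
    destruct (Nat.eq_dec n 2) as [->|Hn2].
    + now apply (two_step_chain_tree_like rs a).
    + apply (increasing_chain_tree_like n rs a Hlen Hc).
      apply (short_chain_increasing n a _ (chain_step_mod _ _ _ Hc)
               (chain_track_lambda _ _ _ Hf Hc) Hlen Hsmall). lia.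
Qed.
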